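(* Let $\ell_1,\ell_2\in H_1(\mathbb{C}^2)$ be fixed, non-proportional linear forms. Then a general binary quartic $p\in H_4(\mathbb{C}^2)$ has exactly two representations $$p(x,y) = (t_1x^2+t_2xy+t_3y^2)^2 + t_4\,\ell_1(x,y)^4 + t_5\,\ell_2(x,y)^4, \qquad t_i\in\mathbb{C}.$$
   Context: $H_d(\mathbb{C}^n)$ denotes the complex vector space of homogeneous polynomials of degree $d$ in $n$ variables. ''A general $p$ has property P'' means P holds for all $p$ in a nonempty Zariski-open subset of $H_d(\mathbb{C}^n)$. Two representations are considered the same if they agree up to replacing the quadratic form by its negative. *)

(* The field C of complex numbers is taken to be an arbitrary
   numClosedFieldType (algebraically closed field of characteristic 0 with
   complex conjugation/norm). *)
From HB Require Import structures.
From mathcomp Require Import all_boot all_order all_algebra.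
Set Implicit Arguments. Unset Strict Implicit. Unset Printing Implicit Defensive.
Import Order.TTheory GRing.Theory Num.Theory.
Local Open Scope ring_scope.

Section Defs.
Variable C : numClosedFieldType.

(* H_4(C^2) is identified with C^5 via coefficients:
   p(x,y) = \sum_k c_k x^(4-k) y^k. *)
Definition quartic_eval (c : 'I_5 -> C) (x y : C) : C :=
  \sum_(k < 5) c k * x ^+ (4 - k) * y ^+ k.

(* Polynomials in 5 variables (the coordinate ring of C^5 = H_4(C^2)),
   encoded as iterated univariate polynomials. *)
Definition mpoly5 := {poly {poly {poly {poly {poly C}}}}}.

Definition mpoly5_eval (P : mpoly5) (v : 'I_5 -> C) : C :=
  (map_poly (fun P3 =>
    (map_poly (fun P2 =>
      (map_poly (fun P1 =>
        (map_poly (fun P0 : {poly C} => P0.[v (inord 0)]) P1).[v (inord 1)])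
      P2).[v (inord 2)])
    P3).[v (inord 3)])
  P).[v (inord 4)].

(* Zariski-open subsets of C^5: complements of zero sets V(S) of a set S of
   polynomials. *)
Definition zariski_open (U : ('I_5 -> C) -> Prop) : Prop :=
  exists S : mpoly5 -> Prop,
    forall v, U v <-> exists f, S f /\ mpoly5_eval f v != 0.

Definition general_quartic (P : ('I_5 -> C) -> Prop) : Prop :=
  exists U, zariski_open U /\ (exists v, U v) /\ forall v, U v -> P v.

Definition lin_eval (l : C * C) (x y : C) : C := l.1 * x + l.2 * y.

Definition proportional (l1 l2 : C * C) : Prop :=
  (exists c : C, l1 = (c * l2.1, c * l2.2)) \/
  (exists c : C, l2 = (c * l1.1, c * l1.2)).

Definition quad_eval (q : C * C * C) (x y : C) : C :=
  q.1.1 * x ^+ 2 + q.1.2 * x * y + q.2 * y ^+ 2.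

Definition quad_opp (q : C * C * C) : C * C * C := (- q.1.1, - q.1.2, - q.2).

(* A representation: (q, (t4, t5)) with
   p = q^2 + t4 l1^4 + t5 l2^4 as polynomials (i.e. for all x y, C infinite). *)
Definition is_rep (l1 l2 : C * C) (c : 'I_5 -> C)
    (r : (C * C * C) * (C * C)) : Prop :=
  forall x y : C,
    quartic_eval c x y =
      quad_eval r.1 x y ^+ 2 + r.2.1 * lin_eval l1 x y ^+ 4
      + r.2.2 * lin_eval l2 x y ^+ 4.

Definition same_rep (r r' : (C * C * C) * (C * C)) : Prop :=
  r' = r \/ r' = (quad_opp r.1, r.2).

Definition exactly_two_reps (l1 l2 : C * C) (c : 'I_5 -> C) : Prop :=
  exists r1 r2,
    [/\ is_rep l1 l2 c r1, is_rep l1 l2 c r2, ~ same_rep r1 r2 &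
        forall r, is_rep l1 l2 c r -> same_rep r1 r \/ same_rep r2 r].

End Defs.

(* The linear change of variables (u, v) = (l1(x,y), l2(x,y)) is
   invertible, and it transports representations with respect to (l1, l2)
   bijectively (and compatibly with q |-> -q) to representations with respect
   to the coordinate forms (x, y).  In the coordinates, writing
   q = A x^2 + B xy + D y^2 and d_0..d_4 for the coefficients of p, a
   representation amounts to
     d_1 = 2AB,  d_3 = 2BD,  d_2 = B^2 + 2AD,  t4 = d_0 - A^2,  t5 = d_4 - D^2.
   If d_1 != 0, then B != 0, A and D are determined by B, and B is a root of
   the biquadratic B^4 - d_2 B^2 + d_1 d_3 / 2.  When moreover d_3 != 0 and
   d_2^2 - 2 d_1 d_3 != 0, this biquadratic has exactly four roots +-w1, +-w2
   with w1^2 != w2^2, i.e. exactly two representations up to sign.  The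
   product of these three non-vanishing conditions is a polynomial in the
   coefficients of p, so it defines a Zariski-open set, which is non-empty
   (take p = l1^3 l2 + l1 l2^3). *)

From Pilot Require Import Defs.
From HB Require Import structures.
From mathcomp Require Import all_boot all_order all_algebra.
From mathcomp Require Import ring.
Import Order.TTheory GRing.Theory Num.Theory.
Local Open Scope ring_scope.
Set Implicit Arguments. Unset Strict Implicit. Unset Printing Implicit Defensive.

Section BinaryQuartics.
Variable C : numClosedFieldType.

Definition eval5 (v : 'I_5 -> C) : {rmorphism mpoly5 C -> C} :=
  horner_eval (v (inord 4)) \o map_poly (horner_eval (v (inord 3)) \o
  map_poly (horner_eval (v (inord 2)) \o map_poly (horner_eval (v (inord 1)) \o
  map_poly (horner_eval (v (inord 0)))))).

(* The evaluation of Defs is this morphism, so its ring laws are available. *)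
Lemma mpoly5_evalE P v : mpoly5_eval P v = eval5 v P. Proof. by []. Qed.

Definition polyfun (f : ('I_5 -> C) -> C) : Prop :=
  exists P : mpoly5 C, forall v, mpoly5_eval P v = f v.

Ltac eval5_simpl := rewrite mpoly5_evalE /=;
  repeat rewrite ?map_polyC ?map_polyX /= ?horner_evalE ?hornerC ?hornerX /=.

Lemma polyfun_const a : polyfun (fun _ => a).
Proof. by exists a%:P%:P%:P%:P%:P => v; eval5_simpl. Qed.

Lemma polyfun_coord i : polyfun (fun v => v i).
Proof.
suff [P HP] : polyfun (fun v => v (inord i)) by exists P => v; rewrite HP inord_val.
case: i => [[|[|[|[|[|m]]]]] lt5] //.
- by exists ('X : {poly C})%:P%:P%:P%:P => v; eval5_simpl.
- by exists ('X : {poly {poly C}})%:P%:P%:P => v; eval5_simpl.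
- by exists ('X : {poly {poly {poly C}}})%:P%:P => v; eval5_simpl.
- by exists ('X : {poly {poly {poly {poly C}}}})%:P => v; eval5_simpl.
- by exists 'X => v; eval5_simpl.
Qed.

Lemma polyfun_add f g : polyfun f -> polyfun g -> polyfun (fun v => f v + g v).
Proof.
by move=> [P HP] [Q HQ]; exists (P + Q) => v; rewrite mpoly5_evalE rmorphD -!mpoly5_evalE HP HQ.
Qed.

Lemma polyfun_mul f g : polyfun f -> polyfun g -> polyfun (fun v => f v * g v).
Proof.
by move=> [P HP] [Q HQ]; exists (P * Q) => v; rewrite mpoly5_evalE rmorphM -!mpoly5_evalE HP HQ.
Qed.

Lemma polyfun_opp f : polyfun f -> polyfun (fun v => - f v).
Proof.
move=> pf; have [P HP] := polyfun_mul (polyfun_const (-1 : C)) pf.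
by exists P => v; rewrite HP mulN1r.
Qed.

Lemma polyfun_exp f n : polyfun f -> polyfun (fun v => f v ^+ n).
Proof. by move=> [P HP]; exists (P ^+ n) => v; rewrite mpoly5_evalE rmorphXn -mpoly5_evalE HP. Qed.

Ltac polyfun_closure :=
  repeat first [ apply: polyfun_const | apply: polyfun_coord | apply: polyfun_add
               | apply: polyfun_opp | apply: polyfun_mul | apply: polyfun_exp ].

Lemma polyfun_nonvanishing_open f : polyfun f -> zariski_open (fun v => f v != 0).
Proof.
move=> [P HP]; exists (eq^~ P) => v; split => [fv | [_ [-> Pv]]]; last by rewrite -HP.
by exists P; rewrite HP.
Qed.

Lemma quartic_evalE (c : 'I_5 -> C) x y : quartic_eval c x y =
  c (inord 0) * x ^+ 4 + c (inord 1) * x ^+ 3 * y + c (inord 2) * x ^+ 2 * y ^+ 2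
  + c (inord 3) * x * y ^+ 3 + c (inord 4) * y ^+ 4.
Proof.
rewrite /quartic_eval (eq_bigr (fun k : 'I_5 => c (inord k) * x ^+ (4 - k) * y ^+ k)).
  rewrite -(big_mkord xpredT (fun k => c (inord k) * x ^+ (4 - k) * y ^+ k)).
  by rewrite !big_nat_recl // big_geq //=; ring.
by move=> k _; rewrite inord_val.
Qed.

Lemma eq_quartic_eval (c c' : 'I_5 -> C) x y :
  c =1 c' -> quartic_eval c x y = quartic_eval c' x y.
Proof. by move=> E; apply: eq_bigr => k _; rewrite E. Qed.

(* A binary quartic form determines its coefficients: the dehomogenized
   difference is a polynomial of size at most 5 vanishing at 0, 1, ..., 4. *)
Lemma quartic_coef_eq (c c' : 'I_5 -> C) :
  (forall x y, quartic_eval c x y = quartic_eval c' x y) -> c =1 c'.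
Proof.
move=> E k; apply/subr0_eq.
pose p := \poly_(i < 5) (c (inord i) - c' (inord i)).
have p_eval y : p.[y] = quartic_eval c 1 y - quartic_eval c' 1 y.
  rewrite horner_poly /quartic_eval -sumrB; apply: eq_bigr => i _.
  by rewrite inord_val !expr1n !mulr1 mulrBl.
have p0 : p = 0.
  apply: (@roots_geq_poly_eq0 _ _ [seq i%:R | i <- iota 0 5]).
  - by apply/allP => _ /mapP [i _ ->]; rewrite /root p_eval E subrr.
  - by rewrite map_inj_uniq ?iota_uniq //; exact: (mulrIn (oner_neq0 C)).
  - by rewrite size_map size_iota size_poly.
by have := congr1 (fun q : {poly C} => q`_k) p0; rewrite coef_poly ltn_ord inord_val coef0.
Qed.

(* The coefficients of q(n1(x,y), n2(x,y)) for a quadratic form q and linear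
   forms n1, n2. *)
Definition quad_subst (n1 n2 : C * C) (q : C * C * C) : C * C * C :=
  let: (a, b) := n1 in let: (g, e) := n2 in
  (q.1.1 * a ^+ 2 + q.1.2 * a * g + q.2 * g ^+ 2,
   2%:R * q.1.1 * a * b + q.1.2 * (a * e + b * g) + 2%:R * q.2 * g * e,
   q.1.1 * b ^+ 2 + q.1.2 * b * e + q.2 * e ^+ 2).
Arguments quad_subst : simpl never.

Lemma quad_subst_eval n1 n2 q x y :
  quad_eval (quad_subst n1 n2 q) x y = quad_eval q (lin_eval n1 x y) (lin_eval n2 x y).
Proof. by case: n1 n2 => [a b] [g e]; rewrite /quad_eval /quad_subst /lin_eval /=; ring. Qed.

Lemma quad_subst_opp n1 n2 q : quad_subst n1 n2 (quad_opp q) = quad_opp (quad_subst n1 n2 q).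
Proof. by case: n1 n2 => [a b] [g e]; rewrite /quad_opp /quad_subst /=; congr (_, _, _); ring. Qed.

(* The coefficients of c(n1(x,y), n2(x,y)) for a quartic form c. *)
Definition quartic_subst (n1 n2 : C * C) (c : 'I_5 -> C) : 'I_5 -> C :=
  let: (a, b) := n1 in let: (g, e) := n2 in
  let c0 := c (inord 0) in let c1 := c (inord 1) in let c2 := c (inord 2) in
  let c3 := c (inord 3) in let c4 := c (inord 4) in
  fun k => nth 0
  [:: c0 * a ^+ 4 + c1 * a ^+ 3 * g + c2 * a ^+ 2 * g ^+ 2 + c3 * a * g ^+ 3 + c4 * g ^+ 4;
      c0 * (4%:R * a ^+ 3 * b) + c1 * (a ^+ 3 * e + 3%:R * a ^+ 2 * b * g)
      + c2 * (2%:R * a ^+ 2 * g * e + 2%:R * a * b * g ^+ 2)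
      + c3 * (3%:R * a * g ^+ 2 * e + b * g ^+ 3) + c4 * (4%:R * g ^+ 3 * e);
      c0 * (6%:R * a ^+ 2 * b ^+ 2) + c1 * (3%:R * a ^+ 2 * b * e + 3%:R * a * b ^+ 2 * g)
      + c2 * (a ^+ 2 * e ^+ 2 + 4%:R * a * b * g * e + b ^+ 2 * g ^+ 2)
      + c3 * (3%:R * a * g * e ^+ 2 + 3%:R * b * g ^+ 2 * e) + c4 * (6%:R * g ^+ 2 * e ^+ 2);
      c0 * (4%:R * a * b ^+ 3) + c1 * (3%:R * a * b ^+ 2 * e + b ^+ 3 * g)
      + c2 * (2%:R * a * b * e ^+ 2 + 2%:R * b ^+ 2 * g * e)
      + c3 * (a * e ^+ 3 + 3%:R * b * g * e ^+ 2) + c4 * (4%:R * g * e ^+ 3);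
      c0 * b ^+ 4 + c1 * b ^+ 3 * e + c2 * b ^+ 2 * e ^+ 2 + c3 * b * e ^+ 3 + c4 * e ^+ 4] k.
Arguments quartic_subst : simpl never.

Lemma quartic_subst_eval n1 n2 c x y :
  quartic_eval (quartic_subst n1 n2 c) x y = quartic_eval c (lin_eval n1 x y) (lin_eval n2 x y).
Proof.
by case: n1 n2 => [a b] [g e]; rewrite !quartic_evalE /quartic_subst /lin_eval !inordK //=; ring.
Qed.

Lemma polyfun_quartic_subst n1 n2 k : polyfun (fun c => quartic_subst n1 n2 c k).
Proof.
case: n1 n2 => [a b] [g e]; case: k => [[|[|[|[|[|m]]]]] lt5] //.
all: by rewrite /quartic_subst /=; polyfun_closure.
Qed.

Definition lin_det (l1 l2 : C * C) : C := l1.1 * l2.2 - l1.2 * l2.1.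
Definition lin_inv1 (l1 l2 : C * C) : C * C := (l2.2 / lin_det l1 l2, - (l1.2 / lin_det l1 l2)).
Definition lin_inv2 (l1 l2 : C * C) : C * C := (- (l2.1 / lin_det l1 l2), l1.1 / lin_det l1 l2).
Arguments lin_inv1 : simpl never.
Arguments lin_inv2 : simpl never.

Lemma nonproportional_det (l1 l2 : C * C) : ~ proportional l1 l2 -> lin_det l1 l2 != 0.
Proof.
case: l1 l2 => [a1 a2] [b1 b2] nonprop; apply/eqP => /subr0_eq /= det0; apply: nonprop.
have [b10 | b1_nz] := eqVneq b1 0.
  have [b20 | b2_nz] := eqVneq b2 0; first by right; exists 0; rewrite b10 b20 !mul0r.
  have a10 : a1 = 0.
    by move: det0; rewrite b10 mulr0 => /eqP; rewrite mulf_eq0 (negPf b2_nz) orbF => /eqP.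
  by left; exists (a2 / b2); rewrite /= a10 b10 mulr0 divfK.
left; exists (a1 / b1); rewrite /= divfK //; congr (_, _).
by rewrite mulrAC det0 mulfK.
Qed.

Definition rep_subst (n1 n2 : C * C) (r : (C * C * C) * (C * C)) : (C * C * C) * (C * C) :=
  (quad_subst n1 n2 r.1, r.2).

Lemma same_rep_subst n1 n2 r r' :
  same_rep r r' -> same_rep (rep_subst n1 n2 r) (rep_subst n1 n2 r').
Proof. by rewrite /rep_subst => -[] ->; [left | right; rewrite /= quad_subst_opp]. Qed.

Section ChangeOfVariables.
Variables l1 l2 : C * C.
Hypothesis det_nz : lin_det l1 l2 != 0.
Local Notation m1 := (lin_inv1 l1 l2).
Local Notation m2 := (lin_inv2 l1 l2).

Lemma lin_inv_left x y :
  lin_eval m1 (lin_eval l1 x y) (lin_eval l2 x y) = x /\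
  lin_eval m2 (lin_eval l1 x y) (lin_eval l2 x y) = y.
Proof.
move: det_nz; case: l1 l2 => [a1 a2] [b1 b2].
by rewrite /lin_eval /lin_inv1 /lin_inv2 /lin_det /= => nz; split; field.
Qed.

Lemma lin_inv_right u v :
  lin_eval l1 (lin_eval m1 u v) (lin_eval m2 u v) = u /\
  lin_eval l2 (lin_eval m1 u v) (lin_eval m2 u v) = v.
Proof.
move: det_nz; case: l1 l2 => [a1 a2] [b1 b2].
by rewrite /lin_eval /lin_inv1 /lin_inv2 /lin_det /= => nz; split; field.
Qed.

Lemma rep_subst_inv r :
  rep_subst l1 l2 (rep_subst m1 m2 r) = r /\ rep_subst m1 m2 (rep_subst l1 l2 r) = r.
Proof.
move: det_nz; case: r => [[[q1 q2] q3] t]; case: l1 l2 => [a1 a2] [b1 b2].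
rewrite /rep_subst /quad_subst /lin_inv1 /lin_inv2 /lin_det /= => nz.
by split; congr (_, _, _, _); field.
Qed.

Lemma quartic_subst_inv d : quartic_subst m1 m2 (quartic_subst l1 l2 d) =1 d.
Proof.
apply: quartic_coef_eq => x y; rewrite !quartic_subst_eval.
by case: (lin_inv_right x y) => -> ->.
Qed.

Lemma is_rep_subst c r :
  is_rep l1 l2 c r <-> is_rep (1, 0) (0, 1) (quartic_subst m1 m2 c) (rep_subst m1 m2 r).
Proof.
have coord (u v : C) : lin_eval (1, 0) u v = u /\ lin_eval (0, 1) u v = v.
  by rewrite /lin_eval /= !mul1r !mul0r addr0 add0r.
split=> rep_r x y.
  rewrite /= quad_subst_eval quartic_subst_eval rep_r.
  by case: (coord x y) (lin_inv_right x y) => -> -> [-> ->].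
have := rep_r (lin_eval l1 x y) (lin_eval l2 x y).
case: (lin_inv_left x y) (coord (lin_eval l1 x y) (lin_eval l2 x y)).
by rewrite /= quad_subst_eval quartic_subst_eval => -> -> [-> ->].
Qed.

Lemma exactly_two_reps_subst c :
  exactly_two_reps (1, 0) (0, 1) (quartic_subst m1 m2 c) -> exactly_two_reps l1 l2 c.
Proof.
case=> s1 [s2 [rep1 rep2 distinct12 only12]].
have inv r := rep_subst_inv r.
exists (rep_subst l1 l2 s1), (rep_subst l1 l2 s2); split.
- by apply/is_rep_subst; rewrite (proj2 (inv _)).
- by apply/is_rep_subst; rewrite (proj2 (inv _)).
- by move=> /(same_rep_subst m1 m2); rewrite !(proj2 (inv _)).
- move=> r /is_rep_subst /only12 [] /(same_rep_subst l1 l2); rewrite (proj1 (inv r));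
    by [left | right].
Qed.
End ChangeOfVariables.

Lemma two_nz : (2%:R : C) != 0. Proof. by rewrite pnatr_eq0. Qed.

Lemma sqr_eq_cases (s w : C) : s ^+ 2 = w ^+ 2 <-> s = w \/ s = - w.
Proof.
split=> [/eqP | [] ->]; rewrite ?sqrrN //.
by rewrite eqf_sqr => /orP [] /eqP; [left | right].
Qed.

Lemma quadratic_roots (a b : C) : a ^+ 2 - 4%:R * b != 0 ->
  exists z1 z2 : C, z1 != z2 /\ forall z, z ^+ 2 - a * z + b = 0 <-> z = z1 \/ z = z2.
Proof.
move=> disc_nz; set w := sqrtC (a ^+ 2 - 4%:R * b).
have w2 : w ^+ 2 = a ^+ 2 - 4%:R * b by exact: sqrtCK.
exists ((a + w) / 2%:R), ((a - w) / 2%:R); split.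
  apply: contra disc_nz => /eqP eq12; rewrite -w2 expf_eq0 /=.
  have -> : w = (a + w) / 2%:R - (a - w) / 2%:R by field; rewrite ?two_nz.
  by rewrite eq12 subrr.
move=> z; have -> : z ^+ 2 - a * z + b = (z - (a + w) / 2%:R) * (z - (a - w) / 2%:R).
  have -> : b = (a ^+ 2 - w ^+ 2) / 4%:R by rewrite w2; field.
  by field.
split=> [/eqP | [] ->]; last 2 first.
- by rewrite subrr mul0r.
- by rewrite subrr mulr0.
- by rewrite mulf_eq0 !subr_eq0 => /orP [] /eqP; [left | right].
Qed.

Lemma biquadratic_roots (a b : C) : a ^+ 2 - 4%:R * b != 0 ->
  exists w1 w2 : C, w1 ^+ 2 != w2 ^+ 2 /\
    forall s, s ^+ 4 - a * s ^+ 2 + b = 0 <-> [\/ s = w1, s = - w1, s = w2 | s = - w2].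
Proof.
case/quadratic_roots => z1 [z2 [z12 roots]].
exists (sqrtC z1), (sqrtC z2); rewrite !sqrtCK; split=> // s.
have -> : s ^+ 4 = (s ^+ 2) ^+ 2 by rewrite -exprM.
apply: (iff_trans (roots _)).
rewrite -{1}(sqrtCK z1) -{1}(sqrtCK z2).
case: (sqr_eq_cases s (sqrtC z1)) (sqr_eq_cases s (sqrtC z2)) => [sq1 _] [sq2 _].
split=> [[/sq1 [] | /sq2 []] -> | [] ->]; rewrite ?sqrrN;
  by [apply: Or41 | apply: Or42 | apply: Or43 | apply: Or44 | left | right].
Qed.

(* The coefficients of q^2 + t4 x^4 + t5 y^4 for r = (q, (t4, t5)). *)
Definition std_coef (r : (C * C * C) * (C * C)) : 'I_5 -> C :=
  let: ((q1, q2, q3), (t4, t5)) := r in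
  fun k => nth 0 [:: q1 ^+ 2 + t4; 2%:R * q1 * q2; q2 ^+ 2 + 2%:R * q1 * q3;
                     2%:R * q2 * q3; q3 ^+ 2 + t5] k.

Lemma is_rep_std d r : is_rep (1, 0) (0, 1) d r <-> d =1 std_coef r.
Proof.
have std_eval x y : quartic_eval (std_coef r) x y = quad_eval r.1 x y ^+ 2
    + r.2.1 * lin_eval (1, 0) x y ^+ 4 + r.2.2 * lin_eval (0, 1) x y ^+ 4.
  case: r => [[[q1 q2] q3] [t4 t5]].
  by rewrite quartic_evalE /std_coef /quad_eval /lin_eval !inordK //=; ring.
split=> [rep_r | d_r x y]; last by rewrite -std_eval; exact: eq_quartic_eval.
by apply: quartic_coef_eq => x y; rewrite std_eval rep_r.
Qed.

(* The genericity condition, in the coordinates u = l1, v = l2. *)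
Definition std_disc (d : 'I_5 -> C) : C :=
  d (inord 1) * d (inord 3) * (d (inord 2) ^+ 2 - 2%:R * d (inord 1) * d (inord 3)).

Lemma polyfun_std_disc_subst n1 n2 : polyfun (fun c => std_disc (quartic_subst n1 n2 c)).
Proof. by rewrite /std_disc; polyfun_closure; exact: polyfun_quartic_subst. Qed.

Section CoordinateForms.
Variable d : 'I_5 -> C.
Local Notation d_ k := (d (inord k)).

Definition std_rep (s : C) : (C * C * C) * (C * C) :=
  ((d_ 1 / (2%:R * s), s, d_ 3 / (2%:R * s)),
   (d_ 0 - (d_ 1 / (2%:R * s)) ^+ 2, d_ 4 - (d_ 3 / (2%:R * s)) ^+ 2)).

Definition std_equation (s : C) : Prop := s ^+ 4 - d_ 2 * s ^+ 2 + d_ 1 * d_ 3 / 2%:R = 0.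

Lemma std_rep_opp s : std_rep (- s) = (quad_opp (std_rep s).1, (std_rep s).2).
Proof. by rewrite /std_rep /quad_opp /= !mulrN !invrN !mulrN !sqrrN. Qed.

Lemma same_std_rep s s' : same_rep (std_rep s) (std_rep s') -> s' ^+ 2 = s ^+ 2.
Proof. by case=> [[_ -> _ _] | [_ -> _ _]]; rewrite ?sqrrN. Qed.

Lemma std_rep_is s :
  d_ 1 * d_ 3 != 0 -> std_equation s -> is_rep (1, 0) (0, 1) d (std_rep s).
Proof.
move=> d13 eq_s.
have s_nz : s != 0.
  apply: contra d13 => /eqP s0; move: eq_s; rewrite /std_equation s0 !expr0n /= mulr0 subrr add0r.
  by move/eqP; rewrite mulf_eq0 invr_eq0 (negPf two_nz) orbF.
have d2E : d_ 2 = s ^+ 2 + d_ 1 * d_ 3 / (2%:R * s ^+ 2).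
  have -> : d_ 2 = d_ 2 + (s ^+ 4 - d_ 2 * s ^+ 2 + d_ 1 * d_ 3 / 2%:R) / s ^+ 2.
    by rewrite eq_s mul0r addr0.
  by field; rewrite ?two_nz ?s_nz.
apply/(is_rep_std d); case=> [[|[|[|[|[|m]]]]] lt5] //.
all: rewrite /std_rep /= -[Ordinal lt5]inord_val /=.
all: by rewrite ?d2E; field; rewrite ?two_nz ?s_nz.
Qed.

Lemma std_rep_complete r :
  d_ 1 != 0 -> is_rep (1, 0) (0, 1) d r -> exists2 s, std_equation s & r = std_rep s.
Proof.
case: r => [[[q1 q2] q3] [t4 t5]] d1_nz /(is_rep_std d) d_coef.
have [e0 e1 e2 e3 e4] : [/\ d_ 0 = q1 ^+ 2 + t4, d_ 1 = 2%:R * q1 * q2,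
    d_ 2 = q2 ^+ 2 + 2%:R * q1 * q3, d_ 3 = 2%:R * q2 * q3 & d_ 4 = q3 ^+ 2 + t5].
  by rewrite !d_coef /std_coef !inordK.
have q2_nz : q2 != 0 by apply: contra d1_nz => /eqP q20; rewrite e1 q20 mulr0.
exists q2; first by rewrite /std_equation e1 e2 e3; field.
rewrite /std_rep.
have -> : d_ 1 / (2%:R * q2) = q1 by rewrite e1; field; rewrite ?two_nz ?q2_nz.
have -> : d_ 3 / (2%:R * q2) = q3 by rewrite e3; field; rewrite ?two_nz ?q2_nz.
by rewrite e0 e4; congr (_, (_, _)); ring.
Qed.

Lemma std_exactly_two_reps : std_disc d != 0 -> exactly_two_reps (1, 0) (0, 1) d.
Proof.
rewrite /std_disc !mulf_eq0 !negb_or => /andP [/andP [d1_nz d3_nz] disc_nz].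
have disc4 : d_ 2 ^+ 2 - 4%:R * (d_ 1 * d_ 3 / 2%:R) != 0.
  by rewrite (_ : _ * _ = 2%:R * d_ 1 * d_ 3) //; field.
have [w1 [w2 [w12 roots]]] := biquadratic_roots disc4.
have d13 : d_ 1 * d_ 3 != 0 by rewrite mulf_neq0.
exists (std_rep w1), (std_rep w2); split.
- by apply: std_rep_is => //; apply/roots; apply: Or41.
- by apply: std_rep_is => //; apply/roots; apply: Or43.
- by move/same_std_rep => e; rewrite e eqxx in w12.
- move=> r /(std_rep_complete d1_nz) [s /roots [] -> ->]; rewrite ?std_rep_opp;
    by [left; left | left; right | right; left | right; right].
Qed.
End CoordinateForms.
End BinaryQuartics.

Theorem theorem4p7 (C : numClosedFieldType) (l1 l2 : C * C) :
  ~ proportional l1 l2 ->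
  general_quartic (fun c => exactly_two_reps l1 l2 c).
Proof.
move=> /nonproportional_det det_nz.
set m1 := lin_inv1 l1 l2; set m2 := lin_inv2 l1 l2.
exists (fun c => std_disc (quartic_subst m1 m2 c) != 0); split; [|split].
- exact/polyfun_nonvanishing_open/polyfun_std_disc_subst.
- (* p = l1^3 l2 + l1 l2^3, whose coefficients in u = l1, v = l2 are 0,1,0,1,0 *)
  pose odd_quartic (k : 'I_5) : C := (odd k)%:R.
  exists (quartic_subst l1 l2 odd_quartic).
  rewrite /std_disc !quartic_subst_inv // /odd_quartic !inordK //=.
  by rewrite (_ : _ * _ = - 2%:R) ?oppr_eq0 ?pnatr_eq0 //; ring.
- by move=> c /std_exactly_two_reps; exact: exactly_two_reps_subst.
Qed.
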